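(* Let $f_1,f_2,f_3$ be functions on an open interval $I$ and let $X_{\mathbb{F}}=\begin{pmatrix}0&f_1&0&0\\-f_1&0&f_2&0\\0&-f_2&0&f_3\\0&0&-f_3&0\end{pmatrix}$. Let $\gamma: I\to\mathbb{E}^4$ be a $2$-regular curve which admits a frame $\mathbb{F}$ with coefficient matrix $X_{\mathbb{F}}$. Then $\gamma$ admits a frame $\mathbb{D}$ with coefficient matrix $X_{\mathbb{D}}=\begin{pmatrix}0&d_1&0&0\\-d_1&0&d_2&d_3\\0&-d_2&0&0\\0&-d_3&0&0\end{pmatrix}$, where $d_1=\epsilon f_1$, $d_2=\epsilon f_2\cos\left(\int f_3\,ds\right)$, $d_3=-\kappa f_2\sin\left(\int f_3\,ds\right)$ for some $\epsilon,\kappa\in\{1,-1\}$ (here $\int f_3\,ds$ denotes an antiderivative of $f_3$).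
   Context: A regular curve $\gamma: I\to\mathbb{E}^4$ is considered with arc-length parameter $s$; $\mathbb{T}=\gamma'$ is its unit tangent vector, and $\gamma$ is $2$-regular if $\mathbb{T}'$ is nowhere vanishing. A frame on $\gamma$ is an ordered orthonormal frame $(\mathbb{T},\mathbb{Z}_1,\mathbb{Z}_2,\mathbb{Z}_3)$ of smooth vector fields along $\gamma$ whose first vector is $\mathbb{T}$; it is identified with the smooth map $\mathbb{Z}: I\to O(4)$ whose rows are these vectors. Its coefficient matrix is the $\mathfrak{o}(4)$-valued function $X$ with $\mathbb{Z}'=X\mathbb{Z}$. *)

From HB Require Import structures.
From mathcomp Require Import all_boot all_order all_algebra.
From mathcomp Require Import all_classical all_reals all_analysis.
Set Implicit Arguments. Unset Strict Implicit. Unset Printing Implicit Defensive.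
Import Order.TTheory GRing.Theory Num.Theory.
Import numFieldNormedType.Exports.
Local Open Scope classical_set_scope.
Local Open Scope ring_scope.

Section Defs.
Variable R : realType.

Definition smooth_on (I : set R) (g : R -> R) : Prop :=
  forall (n : nat) (x : R), I x -> derivable (iter n (@derive1 R R) g) x 1.

Definition mxderiv (m n : nat) (Z : R -> 'M[R]_(m, n)) : R -> 'M[R]_(m, n) :=
  fun s => \matrix_(i, j) derive1 (fun t => Z t i j) s.

Definition mx_smooth_on (m n : nat) (I : set R) (Z : R -> 'M[R]_(m, n)) : Prop :=
  forall i j, smooth_on I (fun t => Z t i j).

Definition tangent (gamma : R -> 'rV[R]_4) : R -> 'rV[R]_4 := mxderiv gamma.

Definition arclength_curve (I : set R) (gamma : R -> 'rV[R]_4) : Prop :=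
  mx_smooth_on I gamma /\
  forall s, I s -> (tangent gamma s *m (tangent gamma s)^T) 0 0 = 1.

Definition two_regular (I : set R) (gamma : R -> 'rV[R]_4) : Prop :=
  forall s, I s -> mxderiv (tangent gamma) s != 0.

Definition is_frame (I : set R) (gamma : R -> 'rV[R]_4) (Z : R -> 'M[R]_4) : Prop :=
  mx_smooth_on I Z /\
  forall s, I s -> Z s *m (Z s)^T = 1%:M /\ row 0 (Z s) = tangent gamma s.

Definition has_coeff (I : set R) (Z X : R -> 'M[R]_4) : Prop :=
  forall s, I s -> mxderiv Z s = X s *m Z s.

Definition XF (a b c : R) : 'M[R]_4 :=
  \matrix_(i, j)
    match nat_of_ord i, nat_of_ord j with
    | 0%N, 1%N => a | 1%N, 0%N => - a
    | 1%N, 2%N => b | 2%N, 1%N => - b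
    | 2%N, 3%N => c | 3%N, 2%N => - c
    | _, _ => 0
    end.

Definition XD (a b c : R) : 'M[R]_4 :=
  \matrix_(i, j)
    match nat_of_ord i, nat_of_ord j with
    | 0%N, 1%N => a | 1%N, 0%N => - a
    | 1%N, 2%N => b | 2%N, 1%N => - b
    | 1%N, 3%N => c | 3%N, 1%N => - c
    | _, _ => 0
    end.

End Defs.

From HB Require Import structures.
From mathcomp Require Import all_boot all_order all_algebra.
From mathcomp Require Import all_classical all_reals all_analysis.
From mathcomp Require Import lra ring.
Import Order.TTheory GRing.Theory Num.Theory.
Import numFieldNormedType.Exports.
Local Open Scope classical_set_scope.
Local Open Scope ring_scope.

(* Rotate the last two frame vectors by an antiderivative theta of f3:
   D = R(theta) F with R the rotation of the (Z2, Z3)-plane.  Then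
   D' = (R' R^T + R X_F R^T) D; the term R' R^T = -theta' J (J = XF 0 0 1)
   cancels the block f3 J of R X_F R^T, whose f2-entry splits into
   f2 cos theta and f2 sin theta.  This gives eps = 1 and kappa = -1.  D is
   smooth because theta is: theta' = f3 is an entry of F' F^T, the
   coefficient matrix of a smooth frame. *)

Set Implicit Arguments. Unset Strict Implicit.

Section Derivatives.
Variable R : realType.
Implicit Types f g th : R -> R.

Lemma derivable1_comp f g x : derivable f x 1 -> derivable g (f x) 1 ->
  derivable (g \o f) x 1.
Proof.
move=> /derivable1_diffP df /derivable1_diffP dg; apply/derivable1_diffP.
exact: differentiable_comp.
Qed.

Lemma derive1_cos_comp th x : derivable th x 1 ->
  derive1 (cos \o th) x = - (sin (th x) * derive1 th x).
Proof.
by move=> dth; rewrite derive1_comp // derive1E derive_val mulNr.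
Qed.

Lemma derive1_sin_comp th x : derivable th x 1 ->
  derive1 (sin \o th) x = cos (th x) * derive1 th x.
Proof.
by move=> dth; rewrite derive1_comp // derive1E derive_val.
Qed.

Lemma mxderiv_mul m n p (A : R -> 'M[R]_(m, n)) (B : R -> 'M[R]_(n, p)) s :
  (forall i j, derivable (fun t => A t i j) s 1) ->
  (forall i j, derivable (fun t => B t i j) s 1) ->
  mxderiv (fun t => A t *m B t) s = mxderiv A s *m B s + A s *m mxderiv B s.
Proof.
move=> dA dB; apply/matrixP => i j; rewrite !mxE.
have -> : (fun t => (A t *m B t) i j) =
          \sum_(k < n) (fun t => A t i k * B t k j).
  by rewrite fct_sumE; apply/funext => t; rewrite mxE.
rewrite derive1E derive_sum; last by move=> k; apply: derivableM.
rewrite -big_split; apply: eq_bigr => k _.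
by rewrite deriveM // !mxE !derive1E addrC [_ * B s k j]mulrC.
Qed.

Lemma mxderiv_comp m n (Z : R -> 'M[R]_(m, n)) th s : derivable th s 1 ->
  (forall i j, derivable (fun a => Z a i j) (th s) 1) ->
  mxderiv (Z \o th) s = derive1 th s *: mxderiv Z (th s).
Proof.
move=> dth dZ; apply/matrixP => i j; rewrite !mxE.
by rewrite -[LHS]/(derive1 ((fun a => Z a i j) \o th) s) derive1_comp // mulrC.
Qed.

End Derivatives.

Section SmoothOn.
Variables (R : realType) (I : set R).
Hypothesis openI : open I.
Implicit Types f g h th : R -> R.

Let near_eq_on f g x : (forall y, I y -> f y = g y) -> I x -> {near x, f =1 g}.
Proof. by move=> fg Ix; apply: filterS fg _; apply: open_nbhs_nbhs. Qed.

Lemma derive1_eq_on f g x : (forall y, I y -> f y = g y) -> I x ->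
  derive1 f x = derive1 g x.
Proof. by move=> fg Ix; rewrite !derive1E; apply/near_eq_derive/near_eq_on. Qed.

Lemma derivable_eq_on f g x : (forall y, I y -> f y = g y) -> I x ->
  derivable f x 1 -> derivable g x 1.
Proof. by move=> fg Ix; apply/near_eq_derivable/near_eq_on. Qed.

Lemma derive1n_eq_on n f g : (forall y, I y -> f y = g y) ->
  forall y, I y -> derive1n n f y = derive1n n g y.
Proof. by elim: n => //= n IH fg y; apply: derive1_eq_on; apply: IH. Qed.

(* smooth_on asks for derivatives of all orders at once; closure under
   products (Leibniz) is proved order by order. *)
Definition derivable_upto n f :=
  forall k, (k <= n)%N -> forall x, I x -> derivable (derive1n k f) x 1.

Lemma smooth_onE f : smooth_on I f <-> forall n, derivable_upto n f.
Proof. by split=> [sf n k _ | sf n]; [exact: sf | exact: (sf n n)]. Qed.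

Lemma derivable_upto_eq_on n f g : (forall y, I y -> f y = g y) ->
  derivable_upto n f -> derivable_upto n g.
Proof.
move=> fg df k kn x Ix.
by apply: (derivable_eq_on (derive1n_eq_on k fg)) => //; apply: df.
Qed.

Lemma derivable_uptoS n f : derivable_upto n.+1 f <->
  (forall x, I x -> derivable f x 1) /\ derivable_upto n (derive1 f).
Proof.
split=> [df | [df1 df] [|k] kn x Ix]; last by rewrite derive1Sn; apply: df.
  by split=> [|k kn x Ix]; [exact: df 0%N isT | rewrite -derive1Sn; exact: df].
exact: df1.
Qed.

Lemma derivable_uptoW n f : derivable_upto n.+1 f -> derivable_upto n f.
Proof. by move=> df k kn; apply: df; apply: leqW. Qed.

Lemma derivable_upto_cst n (a : R) : derivable_upto n (cst a).
Proof.
elim: n a => [|n IH] a; first by case=> // _ x _; apply: derivable_cst.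
apply/derivable_uptoS; split=> [x _|]; first exact: derivable_cst.
by have -> : derive1 (cst a) = cst 0 by apply/funext => x; rewrite derive1_cst.
Qed.

Lemma derivable_uptoD n f g : derivable_upto n f -> derivable_upto n g ->
  derivable_upto n (f \+ g).
Proof.
elim: n f g => [|n IH] f g.
  move=> df dg [|] // _ x Ix.
  by apply: derivableD; [exact: df 0%N isT x Ix | exact: dg 0%N isT x Ix].
move=> /derivable_uptoS[df1 df] /derivable_uptoS[dg1 dg]; apply/derivable_uptoS.
split=> [x Ix|]; first by apply: derivableD; [apply: df1 | apply: dg1].
apply: derivable_upto_eq_on (IH _ _ df dg) => y Iy.
by rewrite /= !derive1E deriveD //; [apply: df1 | apply: dg1].
Qed.

Lemma derivable_uptoN n f : derivable_upto n f -> derivable_upto n (\- f).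
Proof.
elim: n f => [|n IH] f.
  by move=> df [|] // _ x Ix; apply/derivableN/(df 0%N isT x Ix).
move=> /derivable_uptoS[df1 df]; apply/derivable_uptoS.
split=> [x Ix|]; first by apply/derivableN/df1.
apply: derivable_upto_eq_on (IH _ df) => y Iy.
by rewrite /= !derive1E deriveN //; apply: df1.
Qed.

Lemma derivable_uptoM n f g : derivable_upto n f -> derivable_upto n g ->
  derivable_upto n (f \* g).
Proof.
elim: n f g => [|n IH] f g.
  move=> df dg [|] // _ x Ix.
  by apply: derivableM; [exact: df 0%N isT x Ix | exact: dg 0%N isT x Ix].
move=> df dg; have df0 := derivable_uptoW df; have dg0 := derivable_uptoW dg.
case/derivable_uptoS: df => df1 df; case/derivable_uptoS: dg => dg1 dg.
apply/derivable_uptoS; split=> [x Ix|].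
  by apply: derivableM; [apply: df1 | apply: dg1].
apply: derivable_upto_eq_on (derivable_uptoD (IH _ _ df dg0) (IH _ _ df0 dg)).
move=> y Iy; rewrite /= [RHS]derive1E deriveM ?derive1E;
  [|exact: df1 | exact: dg1].
by rewrite addrC [_ * g y]mulrC.
Qed.

Lemma derivable_upto_sum n m (F : 'I_m -> R -> R) :
  (forall k, derivable_upto n (F k)) ->
  derivable_upto n (fun t => \sum_(k < m) F k t).
Proof.
elim: m F => [|m IH] F dF.
  apply: derivable_upto_eq_on (@derivable_upto_cst n 0).
  by move=> y _; rewrite big_ord0.
apply: derivable_upto_eq_on
  (derivable_uptoD (IH _ (fun k => dF _)) (dF ord_max)).
by move=> y _; rewrite [RHS]big_ord_recr.
Qed.

Lemma derivable_upto_cos_sin_comp th h :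
  (forall x, I x -> derivable th x 1 /\ derive1 th x = h x) ->
  (forall n, derivable_upto n h) ->
  forall n, derivable_upto n (cos \o th) /\ derivable_upto n (sin \o th).
Proof.
move=> dth dh.
have dcos x : I x -> derivable (cos \o th) x 1.
  by case/dth => dthx _; apply: derivable1_comp dthx _; apply: derivable_cos.
have dsin x : I x -> derivable (sin \o th) x 1.
  by case/dth => dthx _; apply: derivable1_comp dthx _; apply: derivable_sin.
elim=> [|n [IHcos IHsin]]; first by split=> -[|].
split; apply/derivable_uptoS; split=> //.
- apply: derivable_upto_eq_on (derivable_uptoN (derivable_uptoM IHsin (dh n))).
  by move=> y /dth[dthy th'E]; rewrite derive1_cos_comp // th'E.
- apply: derivable_upto_eq_on (derivable_uptoM IHcos (dh n)).
  by move=> y /dth[dthy th'E]; rewrite derive1_sin_comp // th'E.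
Qed.

Lemma smooth_on_cst (a : R) : smooth_on I (cst a).
Proof. by apply/smooth_onE => n; apply: derivable_upto_cst. Qed.

Lemma smooth_onN f : smooth_on I f -> smooth_on I (\- f).
Proof.
by move/smooth_onE => sf; apply/smooth_onE => n; apply: derivable_uptoN.
Qed.

Lemma smooth_onM f g : smooth_on I f -> smooth_on I g -> smooth_on I (f \* g).
Proof.
move=> /smooth_onE sf /smooth_onE sg; apply/smooth_onE => n.
exact: derivable_uptoM.
Qed.

Lemma smooth_on_sum m (F : 'I_m -> R -> R) : (forall k, smooth_on I (F k)) ->
  smooth_on I (fun t => \sum_(k < m) F k t).
Proof.
move=> sF; apply/smooth_onE => n; apply: derivable_upto_sum => k.
by move/smooth_onE: (sF k); apply.
Qed.

Lemma smooth_on_eq_on f g : (forall y, I y -> f y = g y) ->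
  smooth_on I f -> smooth_on I g.
Proof.
move=> fg /smooth_onE sf; apply/smooth_onE => n.
exact: derivable_upto_eq_on (sf n).
Qed.

Lemma smooth_on_derive1 f : smooth_on I f -> smooth_on I (derive1 f).
Proof.
move=> /smooth_onE sf; apply/smooth_onE => n.
by have /derivable_uptoS[] := sf n.+1.
Qed.

Lemma smooth_on_cos_sin_comp th h :
  (forall x, I x -> derivable th x 1 /\ derive1 th x = h x) -> smooth_on I h ->
  smooth_on I (cos \o th) /\ smooth_on I (sin \o th).
Proof.
move=> dth /smooth_onE sh; rewrite !smooth_onE.
by split=> n; have [] := derivable_upto_cos_sin_comp dth sh n.
Qed.

Lemma mx_smooth_on_mul m n p (A : R -> 'M[R]_(m, n)) (B : R -> 'M[R]_(n, p)) :
  mx_smooth_on I A -> mx_smooth_on I B -> mx_smooth_on I (fun t => A t *m B t).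
Proof.
move=> sA sB i j.
have sAB : smooth_on I (fun t => \sum_(k < n) A t i k * B t k j).
  by apply: smooth_on_sum => k; apply: smooth_onM.
by apply: smooth_on_eq_on sAB => t _; rewrite mxE.
Qed.

Lemma mx_smooth_on_tr m n (A : R -> 'M[R]_(m, n)) :
  mx_smooth_on I A -> mx_smooth_on I (fun t => (A t)^T).
Proof.
by move=> sA i j; apply: smooth_on_eq_on (sA j i) => t _; rewrite mxE.
Qed.

Lemma mx_smooth_on_mxderiv m n (A : R -> 'M[R]_(m, n)) :
  mx_smooth_on I A -> mx_smooth_on I (mxderiv A).
Proof.
move=> sA i j; apply: smooth_on_eq_on (smooth_on_derive1 (sA i j)) => t _.
by rewrite mxE.
Qed.

Lemma coeff_mx_smooth_on (F X : R -> 'M[R]_4) :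
  mx_smooth_on I F -> (forall s, I s -> F s *m (F s)^T = 1%:M) ->
  has_coeff I F X -> mx_smooth_on I X.
Proof.
move=> sF orthF dF i j.
have sdFFt := mx_smooth_on_mul (mx_smooth_on_mxderiv sF) (mx_smooth_on_tr sF).
apply: smooth_on_eq_on (sdFFt i j) => s Is.
by rewrite (dF s Is) -mulmxA (orthF s Is) mulmx1.
Qed.

End SmoothOn.

Section Rotation23.
Variable R : realType.
Implicit Type th : R -> R.

Definition rot23_entry (i j : 'I_4) : R -> R :=
  match nat_of_ord i, nat_of_ord j with
  | 0%N, 0%N | 1%N, 1%N => cst 1
  | 2%N, 2%N | 3%N, 3%N => cos
  | 2%N, 3%N => \- sin
  | 3%N, 2%N => sin
  | _, _ => cst 0
  end.

Definition rot23 (a : R) : 'M[R]_4 := \matrix_(i, j) rot23_entry i j a.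

Lemma rot23_orthogonal a : rot23 a *m (rot23 a)^T = 1%:M.
Proof.
have := cos2Dsin2 a; rewrite !expr2 => cs1.
apply/matrixP => i j; rewrite !mxE !big_ord_recr !big_ord0 /= !mxE.
by move: i j => [[|[|[|[|i]]]] Hi] [[|[|[|[|j]]]] Hj] //=;
  rewrite /rot23_entry /=; lra.
Qed.

Lemma row0_rot23_mul a (A : 'M[R]_4) : row 0 (rot23 a *m A) = row 0 A.
Proof.
apply/rowP => j; rewrite !mxE !big_ord_recl big_ord0 !mxE /=.
by rewrite mul1r !mul0r !addr0; congr (A _ j); apply: val_inj.
Qed.

Lemma scale_XF c x y z : c *: XF x y z = XF (c * x) (c * y) (c * z) :> 'M[R]_4.
Proof.
apply/matrixP => i j; rewrite !mxE.
by move: i j => [[|[|[|[|i]]]] Hi] [[|[|[|[|j]]]] Hj] //=;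
  rewrite ?mulrN ?mulr0.
Qed.

Lemma rot23_XF a x y z :
  XF 0 0 (- z) *m rot23 a + rot23 a *m XF x y z =
  XD x (y * cos a) (y * sin a) *m rot23 a.
Proof.
have := cos2Dsin2 a; rewrite !expr2 => cs1.
apply/matrixP => i j; rewrite !mxE !big_ord_recr !big_ord0 /= !mxE.
move: i j => [[|[|[|[|i]]]] Hi] [[|[|[|[|j]]]] Hj] //=;
  rewrite /rot23_entry /=; try lra.
by rewrite mul1r -[y in LHS]mulr1 -cs1; ring.
Qed.

Lemma rot23_entryE i j : (fun a => rot23 a i j) = rot23_entry i j.
Proof. by apply/funext => a; rewrite mxE. Qed.

Lemma derivable_rot23_entry i j a : derivable (rot23_entry i j) a 1.
Proof. by move: i j => [[|[|[|[|i]]]] Hi] [[|[|[|[|j]]]] Hj] //=. Qed.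

Lemma mxderiv_rot23 a : mxderiv rot23 a = XF 0 0 (-1) *m rot23 a.
Proof.
apply/matrixP => i j; rewrite !mxE rot23_entryE !big_ord_recr big_ord0 /= !mxE.
by move: i j => [[|[|[|[|i]]]] Hi] [[|[|[|[|j]]]] Hj] //=;
  rewrite /rot23_entry /= ?derive1_cst ?derive1N ?derive1E ?derive_val //; lra.
Qed.

Lemma mxderiv_rot23_comp th s : derivable th s 1 ->
  mxderiv (fun t => rot23 (th t)) s = XF 0 0 (- derive1 th s) *m rot23 (th s).
Proof.
move=> dth; rewrite -[fun t => _]/(rot23 \o th) mxderiv_comp //; last first.
  by move=> i j; rewrite rot23_entryE; apply: derivable_rot23_entry.
by rewrite mxderiv_rot23 scalemxAl scale_XF !mulr0 mulrN1.
Qed.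

Lemma mx_smooth_on_rot23_comp (I : set R) th h : open I ->
  (forall x, I x -> derivable th x 1 /\ derive1 th x = h x) -> smooth_on I h ->
  mx_smooth_on I (fun t => rot23 (th t)).
Proof.
move=> openI dth sh i j.
have [scos ssin] := smooth_on_cos_sin_comp openI dth sh.
rewrite -[fun t => _]/((fun a => rot23 a i j) \o th) rot23_entryE.
move: i j => [[|[|[|[|i]]]] Hi] [[|[|[|[|j]]]] Hj]; rewrite /rot23_entry /=.
all: match goal with
  | |- smooth_on _ (cst _ \o _) => exact: smooth_on_cst
  | |- smooth_on _ (cos \o _) => exact: scos
  | |- smooth_on _ (sin \o _) => exact: ssin
  | |- smooth_on _ ((\- sin) \o _) =>
      exact: (smooth_onN openI ssin : smooth_on I (\- sin \o th))
  end.
Qed.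

End Rotation23.

Section RotatedFrame.
Variables (R : realType) (I : set R).
Implicit Types (gamma : R -> 'rV[R]_4) (F : R -> 'M[R]_4) (th : R -> R).

Lemma is_frame_rot23 gamma F th : open I ->
  mx_smooth_on I (fun t => rot23 (th t)) -> is_frame I gamma F ->
  is_frame I gamma (fun t => rot23 (th t) *m F t).
Proof.
move=> openI sM [sF frameF]; split; first exact: mx_smooth_on_mul.
move=> s Is; have [orthF rowF] := frameF s Is.
split; last by rewrite row0_rot23_mul.
by rewrite trmx_mul mulmxA -(mulmxA (rot23 _)) orthF mulmx1 rot23_orthogonal.
Qed.

Lemma has_coeff_rot23 F th f1 f2 f3 : mx_smooth_on I F ->
  (forall s, I s -> derivable th s 1 /\ derive1 th s = f3 s) ->
  has_coeff I F (fun s => XF (f1 s) (f2 s) (f3 s)) ->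
  has_coeff I (fun t => rot23 (th t) *m F t)
    (fun s => XD (f1 s) (f2 s * cos (th s)) (f2 s * sin (th s))).
Proof.
move=> sF dth dF s Is; have [dths th'E] := dth s Is.
rewrite mxderiv_mul => [||i j]; last exact: sF i j 0%N s Is.
  by rewrite mxderiv_rot23_comp // th'E dF // mulmxA -mulmxDl rot23_XF mulmxA.
move=> i j; rewrite -[fun t => _]/((fun a => rot23 a i j) \o th) rot23_entryE.
by apply: derivable1_comp dths _; apply: derivable_rot23_entry.
Qed.

End RotatedFrame.

Unset Implicit Arguments. Set Strict Implicit.

Theorem proposition3 (R : realType) (I : set R)
  (hIopen : open I) (hIint : is_interval I)
  (f1 f2 f3 : R -> R) (gamma : R -> 'rV[R]_4) (F : R -> 'M[R]_4)
  (hcurve : arclength_curve I gamma) (hreg : two_regular I gamma)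
  (hF : is_frame I gamma F)
  (hXF : has_coeff I F (fun s => XF (f1 s) (f2 s) (f3 s)))
  (theta : R -> R)
  (htheta : forall s, I s -> derivable theta s 1 /\ derive1 theta s = f3 s) :
  exists (eps kappa : R) (D : R -> 'M[R]_4),
    (eps = 1 \/ eps = -1) /\ (kappa = 1 \/ kappa = -1) /\
    is_frame I gamma D /\
    has_coeff I D (fun s => XD (eps * f1 s)
                               (eps * f2 s * cos (theta s))
                               (- kappa * f2 s * sin (theta s))).
Proof.
have [sF frameF] := hF.
have sf3 : smooth_on I f3.
  have sX := coeff_mx_smooth_on hIopen sF (fun s Is => (frameF s Is).1) hXF.
  apply: (smooth_on_eq_on hIopen (f := fun t => XF (f1 t) (f2 t) (f3 t) 2 3)).
    by move=> s _; rewrite mxE.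
  exact: sX.
exists 1, (-1), (fun t => rot23 (theta t) *m F t).
split; first by left.
split; first by right.
split.
  exact: is_frame_rot23 hIopen (mx_smooth_on_rot23_comp hIopen htheta sf3) hF.
have -> : (fun s => XD (1 * f1 s) (1 * f2 s * cos (theta s))
                         (- -1 * f2 s * sin (theta s))) =
          (fun s => XD (f1 s) (f2 s * cos (theta s)) (f2 s * sin (theta s))).
  by apply/funext => s; rewrite opprK !mul1r.
exact: has_coeff_rot23 sF htheta hXF.
Qed.
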